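(* Let $G$ be a group, $A\subseteq G$ a nonempty finite set and $\epsilon\in(0,1)$. Let $X=\operatorname{St}^\ell_{\epsilon^2/162}(A)$ and fix $\nu\in(0,1)$ with $\nu\leq|X|/|A|$. Set $S=\operatorname{St}^r_{\epsilon\nu/9}(A)$ and $A'=\{a\in A:|Xa\setminus A|<\frac{\epsilon}{9}|X|\}$. If $D\subseteq G$ satisfies $A'\subseteq D\subseteq A'S$, then $|A\triangle D|<\epsilon|A|$.
   Context: $Xa=\{xa:x\in X\}$, $A'S=\{as:a\in A',s\in S\}$, $\triangle$ symmetric difference. For finite $A$ and $\eta\in(0,1)$: $\operatorname{St}^\ell_\eta(A)=\{x\in G:|xA\triangle A|\leq\eta|A|\}$ and $\operatorname{St}^r_\eta(A)=\{x\in G:|Ax\triangle A|\leq\eta|A|\}$. *)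

From HB Require Import structures.
From mathcomp Require Import all_boot all_order all_algebra.
From mathcomp Require Import monoid.
From mathcomp Require Import finmap.
Set Implicit Arguments. Unset Strict Implicit. Unset Printing Implicit Defensive.
Import Order.TTheory GRing.Theory Num.Theory.
Local Open Scope fset_scope.

Section Defs.
Variable G : groupType.

Definition lmul (x : G) (A : {fset G}) : {fset G} := [fset (x * a)%g | a in A].
Definition rmul (A : {fset G}) (x : G) : {fset G} := [fset (a * x)%g | a in A].
Definition setmul (X A : {fset G}) : {fset G} :=
  [fset (x * a)%g | x in X, a in A].
Definition symdiff (A B : {fset G}) : {fset G} := (A `\` B) `|` (B `\` A).

Variable R : realFieldType.
Definition in_Stl (eta : R) (A : {fset G}) (x : G) : Prop :=
  ((#|` symdiff (lmul x A) A|)%:R <= eta * (#|` A|)%:R)%R.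
Definition in_Str (eta : R) (A : {fset G}) (x : G) : Prop :=
  ((#|` symdiff (rmul A x) A|)%:R <= eta * (#|` A|)%:R)%R.
End Defs.

(* Double counting the pairs (x, a) in X * A with xa outside A gives
   sum_a |Xa \ A| = sum_x |xA \ A| <= |X| eps^2 |A| / 162, so by Markov's
   inequality |A \ A'| <= eps |A| / 18.  An element y = as of D \ A, with a in A'
   and s in S, satisfies xy in A for all x in X except those with xa outside A
   (fewer than eps |X| / 9) and those with xa in A but xas outside A (at most
   |As \ A| <= eps nu |A| / 9 <= eps |X| / 9); so xy in A for at least 7|X|/9
   elements x of X.  Since y is outside A, xy lies in A \ xA, which has at most
   eps^2 |A| / 162 elements for each x, whence |D \ A| <= eps^2 |A| / 126.
   Finally |A △ D| <= |A \ A'| + |D \ A| < eps |A|. *)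

From mathcomp Require Import all_boot all_order all_algebra.
From mathcomp Require Import monoid finmap lra.
Set Implicit Arguments.
Unset Strict Implicit.
Unset Printing Implicit Defensive.

Import Order.TTheory GRing.Theory Num.Theory.
Local Open Scope fset_scope.

Section FsetCounting.
Variables T T' : choiceType.
Implicit Types E F : {fset T}.

Lemma card_fset_cond_sum E (p : pred T) :
  #|` [fset x in E | p x]| = \sum_(x <- E) (p x : nat).
Proof. by rewrite -big_mkcond /= big_fset_condE card_fset_sum1. Qed.

Lemma card_fset_cond_exchange E F (r : T -> T -> bool) :
  \sum_(x <- E) #|` [fset y in F | r x y]| =
  \sum_(y <- F) #|` [fset x in E | r x y]|.
Proof.
under eq_bigr do rewrite card_fset_cond_sum.
rewrite exchange_big /=.
by under [RHS]eq_bigr do rewrite card_fset_cond_sum.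
Qed.

Lemma leq_card_fset_in_inj E (F : {fset T'}) (f : T -> T') :
  {in E &, injective f} -> {in E, forall x, f x \in F} -> (#|` E| <= #|` F|)%N.
Proof.
move=> /card_in_imfsetP/eqP <- f_EF; apply: fsubset_leq_card.
by apply/fsubsetP => _ /imfsetP[x /= xE ->]; apply: f_EF.
Qed.

Lemma card_imfsetD E (F : {fset T'}) (f : T -> T') : injective f ->
  #|` [fset f x | x in E] `\` F| = #|` [fset x in E | f x \notin F]|.
Proof.
move=> f_inj; set B := [fset x in E | f x \notin F].
have /card_in_imfsetP/eqP <- : {in B &, injective f} by move=> x y _ _ /f_inj.
congr #|` _|.
apply/fsetP => y; rewrite !inE; apply/andP/imfsetP => /= [[yF /imfsetP[x /= xE eq_y]]|[x]].
  by exists x => //; rewrite !inE /= xE -eq_y.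
by rewrite !inE /= => /andP[xE fxF] ->; split=> //; apply: in_imfset.
Qed.

Lemma leq_sum_fsubset E F (f : T -> nat) : E `<=` F ->
  (\sum_(x <- E) f x <= \sum_(x <- F) f x)%N.
Proof.
by move/fsubsetP; apply: (uniq_sub_le_big leqnn (fun m n => leq_addr n m)).
Qed.

Variable R : numDomainType.
Local Open Scope ring_scope.

Lemma card_mul_le_sum E F (f : T -> nat) (t : R) : E `<=` F ->
  {in E, forall x, t <= (f x)%:R} -> #|` E|%:R * t <= (\sum_(x <- F) f x)%:R.
Proof.
move=> sEF f_ge; apply: le_trans (_ : (\sum_(x <- E) f x)%:R <= _); last first.
  by rewrite ler_nat leq_sum_fsubset.
rewrite card_fset_sum1 !natr_sum mulr_suml big_seq [leRHS]big_seq.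
by apply: ler_sum => x xE; rewrite mul1r f_ge.
Qed.

Lemma sum_le_card_mul E (f : T -> nat) (c : R) :
  {in E, forall x, (f x)%:R <= c} -> (\sum_(x <- E) f x)%:R <= #|` E|%:R * c.
Proof.
move=> f_le; rewrite card_fset_sum1 !natr_sum mulr_suml big_seq [leRHS]big_seq.
by apply: ler_sum => x xE; rewrite mul1r f_le.
Qed.

End FsetCounting.

Section GroupCounting.
Variable G : groupType.
Implicit Types (A X Y : {fset G}) (a s x : G).

Lemma card_rmulD X A a :
  #|` rmul X a `\` A| = #|` [fset x in X | (x * a)%g \notin A]|.
Proof. exact/card_imfsetD/mulIg. Qed.

Lemma card_lmulD x A :
  #|` lmul x A `\` A| = #|` [fset a in A | (x * a)%g \notin A]|.
Proof. exact/card_imfsetD/mulgI. Qed.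

Lemma sum_card_rmulD X A :
  \sum_(a <- A) #|` rmul X a `\` A| = \sum_(x <- X) #|` lmul x A `\` A|.
Proof.
under eq_bigr do rewrite card_rmulD.
rewrite (card_fset_cond_exchange _ _ (fun a x => (x * a)%g \notin A)).
by under [RHS]eq_bigr do rewrite card_lmulD.
Qed.

Lemma card_lmul_hits_le x A Y : [disjoint Y & A] ->
  (#|` [fset y in Y | (x * y)%g \in A]| <= #|` A `\` lmul x A|)%N.
Proof.
move/fdisjointP=> YA; apply: (leq_card_fset_in_inj (f := fun y => (x * y)%g)).
  by move=> ? ? _ _ /mulgI.
move=> y /[!inE] /andP[yY xyA]; rewrite xyA andbT.
by apply/imfsetP => -[z /= zA /mulgI eq_yz]; move: (YA y yY); rewrite eq_yz zA.
Qed.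

Lemma card_le_hits_rmulD X A a s :
  (#|` X| <= #|` [fset x in X | (x * (a * s))%g \in A]|
             + #|` rmul X a `\` A| + #|` rmul A s `\` A|)%N.
Proof.
rewrite card_rmulD; set P := [fset x in X | _]; set Q := [fset x in X | _].
set Bad := [fset x in X | ((x * a)%g \in A) && ((x * a * s)%g \notin A)].
have X_cover : X `<=` P `|` Q `|` Bad.
  apply/fsubsetP => x xX; rewrite !inE /= xX mulgA.
  by case: ((x * a)%g \in A); case: ((x * a * s)%g \in A); rewrite ?orbT.
have Bad_le : (#|` Bad| <= #|` rmul A s `\` A|)%N.
  rewrite card_rmulD; apply: (leq_card_fset_in_inj (f := fun x => (x * a)%g)).
    by move=> ? ? _ _ /mulIg.
  by move=> x /[!inE] /andP[_ /andP[xaA xasA]]; rewrite /= xaA xasA.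
apply: leq_trans (fsubset_leq_card X_cover) _.
apply: leq_trans (leq_card_fsetU _ _).1 _; rewrite leq_add //.
exact: (leq_card_fsetU _ _).1.
Qed.

Lemma card_symdiff_le A A' D : A' `<=` D ->
  (#|` symdiff A D| <= #|` A `\` A'| + #|` D `\` A|)%N.
Proof.
move=> sA'D; apply: leq_trans (leq_card_fsetU _ _).1 _.
by rewrite leq_add2r fsubset_leq_card // fsetDS.
Qed.

End GroupCounting.

Section StabilizerBounds.
Variables (G : groupType) (R : realFieldType) (eta : R) (A : {fset G}).
Local Open Scope ring_scope.

Lemma Stl_card_lmulD_le x : in_Stl eta A x ->
  #|` lmul x A `\` A|%:R <= eta * #|` A|%:R.
Proof. by apply: le_trans; rewrite ler_nat fsubset_leq_card ?fsubsetUl. Qed.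

Lemma Stl_card_Dlmul_le x : in_Stl eta A x ->
  #|` A `\` lmul x A|%:R <= eta * #|` A|%:R.
Proof. by apply: le_trans; rewrite ler_nat fsubset_leq_card ?fsubsetUr. Qed.

Lemma Str_card_rmulD_le s : in_Str eta A s ->
  #|` rmul A s `\` A|%:R <= eta * #|` A|%:R.
Proof. by apply: le_trans; rewrite ler_nat fsubset_leq_card ?fsubsetUl. Qed.

End StabilizerBounds.

Section LeftStabilizer.
Variables (G : groupType) (R : realFieldType) (delta : R) (A X : {fset G}).
Hypothesis X_stab : {in X, forall x, in_Stl delta A x}.
Hypothesis X_neq0 : X != fset0.
Local Open Scope ring_scope.

Let cardX_gt0 : 0 < #|` X|%:R :> R.
Proof. by rewrite ltr0n cardfs_gt0. Qed.

Lemma card_rmulD_large_le (B : {fset G}) (t : R) : B `<=` A ->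
    {in B, forall a, t * #|` X|%:R <= #|` rmul X a `\` A|%:R} ->
  #|` B|%:R * t <= delta * #|` A|%:R.
Proof.
move=> sBA large; rewrite -(ler_pM2l cardX_gt0) mulrCA (mulrC #|` X|%:R t).
apply: le_trans (card_mul_le_sum sBA large) _.
rewrite sum_card_rmulD; apply: sum_le_card_mul => x.
by move/X_stab/Stl_card_lmulD_le.
Qed.

Lemma card_hits_large_le (Y : {fset G}) (t : R) : [disjoint Y & A] ->
    {in Y, forall y, t * #|` X|%:R <= #|` [fset x in X | (x * y)%g \in A]|%:R} ->
  #|` Y|%:R * t <= delta * #|` A|%:R.
Proof.
move=> YA large; rewrite -(ler_pM2l cardX_gt0) mulrCA (mulrC #|` X|%:R t).
apply: le_trans (card_mul_le_sum (fsubset_refl Y) large) _.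
rewrite (card_fset_cond_exchange _ _ (fun y x => (x * y)%g \in A)).
apply: sum_le_card_mul => x /X_stab/Stl_card_Dlmul_le; apply: le_trans.
by rewrite ler_nat card_lmul_hits_le.
Qed.

End LeftStabilizer.

Section Lemma3p5Setting.
Variables (G : groupType) (R : realFieldType) (A X S A' : {fset G}) (eps nu : R).
Local Open Scope ring_scope.

Hypothesis A_neq0 : A != fset0.
Hypothesis eps_gt0 : 0 < eps.
Hypothesis eps_lt1 : eps < 1.
Hypothesis X_def : forall x, x \in X <-> in_Stl (eps ^+ 2 / 162) A x.
Hypothesis nu_gt0 : 0 < nu.
Hypothesis nu_le : nu <= #|` X|%:R / #|` A|%:R.
Hypothesis S_def : forall s, s \in S <-> in_Str (eps * nu / 9) A s.
Hypothesis A'_def : forall a, a \in A' <->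
  (a \in A /\ #|` rmul X a `\` A|%:R < eps / 9 * #|` X|%:R).

Let X_stab : {in X, forall x, in_Stl (eps ^+ 2 / 162) A x}.
Proof. by move=> x /X_def. Qed.

Let nuA_le : nu * #|` A|%:R <= #|` X|%:R.
Proof. by rewrite -ler_pdivlMr // ltr0n cardfs_gt0. Qed.

Let X_neq0 : X != fset0.
Proof.
rewrite -cardfs_gt0 -(ltr0n R); apply: lt_le_trans nuA_le.
by rewrite mulr_gt0 // ltr0n cardfs_gt0.
Qed.

Lemma card_A_minus_A'_le : #|` A `\` A'|%:R <= eps * #|` A|%:R / 18.
Proof.
have weighted_le : #|` A `\` A'|%:R * (eps / 9) <= eps ^+ 2 / 162 * #|` A|%:R.
  apply: (card_rmulD_large_le X_stab X_neq0 (fsubsetDl A A')) => a.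
  move=> /[!inE] /andP[aNA' aA]; rewrite leNgt; apply: contraNN aNA' => small.
  exact/A'_def.
by rewrite -(ler_pM2r eps_gt0); lra.
Qed.

Lemma card_hits_A'S_ge a s : a \in A' -> s \in S ->
  (7 / 9 : R) * #|` X|%:R <= #|` [fset x in X | (x * (a * s))%g \in A]|%:R.
Proof.
move=> /A'_def[_ small_a] /S_def/Str_card_rmulD_le small_s.
have := card_le_hits_rmulD X A a s; rewrite -(ler_nat R) !natrD.
have epsX_le : eps * #|` X|%:R <= #|` X|%:R by rewrite ler_piMl // ltW.
have := ler_wpM2l (ltW eps_gt0) nuA_le.
lra.
Qed.

Lemma card_D_minus_A_le D : D `<=` setmul A' S ->
  #|` D `\` A|%:R * (7 / 9) <= eps ^+ 2 / 162 * #|` A|%:R.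
Proof.
move=> sDA'S; apply: (card_hits_large_le X_stab X_neq0).
  by apply/fdisjointP => y /[!inE] /andP[].
move=> y /[!inE] /andP[_ /(fsubsetP sDA'S)/imfset2P[a aA' [s sS ->]]].
exact: card_hits_A'S_ge.
Qed.

End Lemma3p5Setting.

Local Open Scope ring_scope.

Theorem lemma3p5 (G : groupType) (R : realFieldType)
  (A : {fset G}) (eps nu : R) (X S A' D : {fset G}) :
  A != fset0 ->
  0 < eps < 1 ->
  (forall x : G, x \in X <-> in_Stl (eps ^+ 2 / 162) A x) ->
  0 < nu < 1 ->
  nu <= (#|` X|)%:R / (#|` A|)%:R ->
  (forall s : G, s \in S <-> in_Str (eps * nu / 9) A s) ->
  (forall a : G, a \in A' <->
     (a \in A /\ (#|` rmul X a `\` A|)%:R < eps / 9 * (#|` X|)%:R)) ->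
  A' `<=` D -> D `<=` setmul A' S ->
  (#|` symdiff A D|)%:R < eps * (#|` A|)%:R.
Proof.
move=> A_neq0 /andP[eps_gt0 eps_lt1] X_def /andP[nu_gt0 _] nu_le S_def A'_def.
move=> sA'D sDA'S.
have := card_A_minus_A'_le A_neq0 eps_gt0 X_def nu_gt0 nu_le A'_def.
have := card_D_minus_A_le A_neq0 eps_gt0 eps_lt1 X_def nu_gt0 nu_le S_def A'_def sDA'S.
have := card_symdiff_le A sA'D; rewrite -(ler_nat R) natrD.
have epsA_gt0 : 0 < eps * #|` A|%:R by rewrite mulr_gt0 // ltr0n cardfs_gt0.
have eps2A_le : eps ^+ 2 * #|` A|%:R <= eps * #|` A|%:R.
  by rewrite expr2 -mulrA ler_piMl // ltW.
lra.
Qed.
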